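(* Let $\phi\in\,]0,\pi[$, $M\in\mathbb{R}$, $N>0$. Let $\Sigma$ be the Keplerian branch around ${\rm O}$ in the plane ${\rm O}xy$ with equation $r=My+N$. Consider the affine map $(x_1,y_1)\mapsto(x_2,y_2)$ defined by $x_1=x_2\sin\phi-y_2M\cos\phi-N\cos\phi$, $y_1=y_2$. Then the image of $\Sigma$ by this map is the Keplerian branch around ${\rm O}$ with equation $r=x\cos\phi+yM\sin\phi+N\sin\phi$.
   Context: In the Euclidean plane ${\rm O}xy$, $r=\sqrt{x^2+y^2}$. A Keplerian branch around ${\rm O}$ is the image of a solution of Newton's system $\ddot q=-q/\|q\|^3$ (extended through collisions by bouncing back along the same ray with the same energy). For $\gamma>0$, the set of points satisfying $r=\alpha x+\beta y+\gamma$ is an (irreducible) Keplerian branch around ${\rm O}$, and every nonrectilinear Keplerian branch is of this form. *)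

From Stdlib Require Import Reals.
Open Scope R_scope.

Definition rad (x y : R) : R := sqrt (x ^ 2 + y ^ 2).

Definition kepler_branch (a b c : R) (p : R * R) : Prop :=
  rad (fst p) (snd p) = a * fst p + b * snd p + c.

(** With [s = sin phi], [c = cos phi] and [L = M y + N], the preimage of
    [(x, y)] has abscissa [s x - c L], and [(x, L) |-> (s x - c L, c x + s L)]
    is a rotation.  Since [c x + s L] is the right-hand side of the image
    equation, the two squared equations [r^2 = rhs^2] are equivalent.  For the
    signs: the right-hand side on a branch with positive constant term is
    positive (such a branch avoids O), and as [|c| <= 1] and [s > 0] this forces
    the right-hand side of the other equation to be positive as well. *)

From Stdlib Require Import Reals Lra Psatz.
Open Scope R_scope.

Lemma kepler_branch_iff (a b k x y : R) :
  kepler_branch a b k (x, y) <->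
  x ^ 2 + y ^ 2 = (a * x + b * y + k) ^ 2 /\ 0 <= a * x + b * y + k.
Proof.
  unfold kepler_branch, rad; cbn [fst snd]; split.
  - intros Hr; rewrite <- Hr; split.
    + rewrite pow2_sqrt; [reflexivity | nra].
    + apply sqrt_pos.
  - intros [Hsq Hpos]; rewrite Hsq; exact (sqrt_pow2 _ Hpos).
Qed.

Lemma kepler_branch_rhs_pos (a b k x y : R) :
  0 < k -> kepler_branch a b k (x, y) -> 0 < a * x + b * y + k.
Proof.
  intros hk Hb; apply kepler_branch_iff in Hb as [Hsq Hpos].
  destruct (Rle_lt_or_eq_dec _ _ Hpos) as [Hlt | Hzero]; [exact Hlt |].
  rewrite <- Hzero in Hsq.
  assert (Hx : x = 0) by nra.
  assert (Hy : y = 0) by nra.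
  subst x y; lra.
Qed.

Lemma sum_sq_eq_sq_pos (c u v L : R) :
  -1 <= c <= 1 -> u ^ 2 + v ^ 2 = L ^ 2 -> c * u < L -> 0 < L.
Proof.
  intros Hc Hsq Hlt.
  destruct (Rlt_or_le 0 L) as [Hpos | Hnpos]; [exact Hpos | exfalso].
  assert (Hc2 : c ^ 2 <= 1) by nra.
  assert (Hcu : (c * u) ^ 2 <= u ^ 2)
    by (replace ((c * u) ^ 2) with (c ^ 2 * u ^ 2) by ring; nra).
  assert (HL : L ^ 2 < (c * u) ^ 2) by nra.
  nra.
Qed.

Section Rotation.

Variables s c : R.
Hypothesis hsc : s ^ 2 + c ^ 2 = 1.

Lemma rotation_sum_sq (u v : R) :
  (s * u - c * v) ^ 2 + (c * u + s * v) ^ 2 = u ^ 2 + v ^ 2.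
Proof.
  transitivity ((s ^ 2 + c ^ 2) * (u ^ 2 + v ^ 2)); [ring | rewrite hsc; ring].
Qed.

Lemma rotation_inv_snd (u v : R) : s * (c * u + s * v) - c * (s * u - c * v) = v.
Proof.
  transitivity ((s ^ 2 + c ^ 2) * v); [ring | rewrite hsc; ring].
Qed.

End Rotation.

Lemma kepler_branch_rotate (s c M N x y : R) :
  0 < s -> s ^ 2 + c ^ 2 = 1 -> 0 < N ->
  kepler_branch 0 M N (s * x - c * (M * y + N), y) <->
  kepler_branch c (M * s) (N * s) (x, y).
Proof.
  intros hs hsc hN.
  assert (hc : -1 <= c <= 1) by (split; nra).
  assert (Hsq := rotation_sum_sq s c hsc x (M * y + N)).
  assert (Hinv := rotation_inv_snd s c hsc x (M * y + N)).
  assert (Hrhs_pre : 0 * (s * x - c * (M * y + N)) + M * y + N = M * y + N)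
    by ring.
  assert (Hrhs_img : c * x + M * s * y + N * s = c * x + s * (M * y + N))
    by ring.
  split.
  - intros Hpre.
    pose proof (kepler_branch_rhs_pos _ _ _ _ _ hN Hpre) as HL.
    apply kepler_branch_iff in Hpre as [Hpre _].
    apply kepler_branch_iff; rewrite Hrhs_pre in HL, Hpre; rewrite Hrhs_img.
    assert (Himg : x ^ 2 + y ^ 2 = (c * x + s * (M * y + N)) ^ 2) by lra.
    split; [exact Himg |].
    apply Rlt_le, (sum_sq_eq_sq_pos c x y); [exact hc | exact Himg | nra].
  - intros Himg.
    assert (HN : 0 < N * s) by nra.
    pose proof (kepler_branch_rhs_pos _ _ _ _ _ HN Himg) as HL.
    apply kepler_branch_iff in Himg as [Himg _].
    apply kepler_branch_iff; rewrite Hrhs_img in HL, Himg; rewrite Hrhs_pre.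
    assert (Hpre : (s * x - c * (M * y + N)) ^ 2 + y ^ 2 = (M * y + N) ^ 2)
      by lra.
    split; [exact Hpre |].
    apply Rlt_le, (sum_sq_eq_sq_pos (- c) (s * x - c * (M * y + N)) y);
      [lra | exact Hpre | nra].
Qed.

Theorem lemma5 (phi M N : R) (hphi0 : 0 < phi) (hphi1 : phi < PI) (hN : 0 < N) :
  forall x2 y2 : R,
    (exists x1 y1 : R,
        kepler_branch 0 M N (x1, y1) /\
        x1 = x2 * sin phi - y2 * M * cos phi - N * cos phi /\
        y1 = y2)
    <-> kepler_branch (cos phi) (M * sin phi) (N * sin phi) (x2, y2).
Proof.
  intros x y.
  assert (hs : 0 < sin phi) by (apply sin_gt_0; lra).
  assert (hsc : sin phi ^ 2 + cos phi ^ 2 = 1)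
    by (rewrite <- (sin2_cos2 phi); unfold Rsqr; ring).
  assert (Hx1 : x * sin phi - y * M * cos phi - N * cos phi
                = sin phi * x - cos phi * (M * y + N)) by ring.
  rewrite Hx1, <- kepler_branch_rotate by assumption.
  split.
  - intros (x1 & y1 & Hb & -> & ->); exact Hb.
  - intros Hb; exists (sin phi * x - cos phi * (M * y + N)), y; auto.
Qed.
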